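(* Let $G=(G_t)_{t\geq 0}$, $G_t=(V_t,E_t)$, be a dynamic graph generated by D3G3 (with arbitrary parameters $d$, $S_S$, $S_C$ and arbitrary non-null seed graph $G_0$). Write $n_t=|V_t|$ and let $\mathcal{N}^V_t$ denote the vertices nervousness at time $t$. If for all $t>0$ we have $n_t>0$ and $\mathcal{N}^V_t>0$, then $G$ is sustainable.
   Context: Let $\mathbb{T}=[0,1)^2$ be the unit torus (opposite sides identified) with its toroidal Euclidean distance $\mathrm{dist}$. A geometric graph with threshold $d$ on a finite set $V$ of points of $\mathbb{T}$ has edge set $E=\{\{u,v\}: u\neq v\in V,\ \mathrm{dist}(u,v)\leq d\}$. D3G3 (Degree-Driven Dynamic Geometric Graph Generator) takes parameters $d\in(0,\sqrt2/2)$, two sets $S_S,S_C$ of non-negative integers, and a non-null seed geometric graph $G_0$. Given $G_t=(V_t,E_t)$, the graph $G_{t+1}$ is obtained by applying simultaneously to every $v\in V_t$ (with $\deg(v)$ its degree in $G_t$): (conservation rule) $v\in V_{t+1}$, at the same position, iff $\deg(v)\in S_S$; (creation rule) if $\deg(v)\in S_C$, a brand new vertex (distinct from all vertices ever present) is added to $V_{t+1}$ at a position chosen uniformly at random in $\mathbb{T}$, independently of everything else. $V_{t+1}$ contains no other vertices, and $E_{t+1}$ is given by the geometric rule with threshold $d$. The vertices nervousness is $\mathcal{N}^V_t=\frac{|V_{t+1}\triangle V_t|}{|V_{t+1}\cup V_t|}$, where $A\triangle B=(A\cup B)\setminus(A\cap B)$. A dynamic graph $G$ is sustainable if neither of the following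 holds: (1) there is $T\in\mathbb{N}$ with $G_t=(\emptyset,\emptyset)$ for all $t\geq T$; (2) there are $T\in\mathbb{N}$ and $k\geq1$ with $G_t=G_{t+k}$ for all $t\geq T$. *)

From HB Require Import structures.
From mathcomp Require Import all_boot all_order all_algebra.
From mathcomp Require Import finmap.
From mathcomp Require Import reals.

Set Implicit Arguments.
Unset Strict Implicit.
Unset Printing Implicit Defensive.

Import Order.TTheory GRing.Theory Num.Theory.
Local Open Scope ring_scope.
Local Open Scope fset_scope.

(* Vertices are identified by natural numbers; their positions are given by a
   global map [pos : nat -> point R] (a vertex keeps its position for its whole
   life, and a vertex is never re-created, see [is_D3G3]). *)
Definition point (R : realType) := (R * R)%type.

Definition in_torus (R : realType) (p : point R) : bool :=
  (0 <= p.1 < 1) && (0 <= p.2 < 1).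

Definition tcoord (R : realType) (a b : R) : R :=
  Num.min `|a - b| (1 - `|a - b|).

Definition tdist (R : realType) (p q : point R) : R :=
  Num.sqrt (tcoord p.1 q.1 ^+ 2 + tcoord p.2 q.2 ^+ 2).

(* A graph: a finite vertex set and a finite set of (unordered) edges,
   each edge being a 2-element set of vertices. *)
Definition graph := ({fset nat} * {fset {fset nat}})%type.

Definition null_graph : graph := (fset0, fset0).

Definition geo_graph (R : realType) (d : R) (pos : nat -> point R)
    (V : {fset nat}) : graph :=
  (V, [fset [fset p.1; p.2] | p in
        [fset p in V `*` V | (p.1 != p.2) && (tdist (pos p.1) (pos p.2) <= d)]]).

Definition deg (G : graph) (v : nat) : nat :=
  #|` [fset e in G.2 | v \in e] |.

(* A (realization of a) dynamic graph generated by D3G3 with parameters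
   d, S_S, S_C: the vertex sets are [V t], the graph at time t is
   [geo_graph d pos (V t)]. The random positions of created vertices are
   arbitrary points of the torus (the statement is about every realization). *)
Definition is_D3G3 (R : realType) (d : R) (SS SC : pred nat)
    (pos : nat -> point R) (V : nat -> {fset nat}) : Prop :=
  (forall t v, v \in V t -> in_torus (pos v)) /\
  forall t,
    let G := geo_graph d pos (V t) in
    let creators := [fset v in V t | SC (deg G v)] in
    [fset v in V t | v \in V t.+1] = [fset v in V t | SS (deg G v)] /\
    exists new : nat -> nat,
      {in creators &, injective new} /\
      [fset v in V t.+1 | v \notin V t] = new @` creators /\
      (forall v s, v \in creators -> (s <= t)%N -> new v \notin V s).

Definition nervousness (R : realType) (V : nat -> {fset nat}) (t : nat) : R :=
  (#|` (V t.+1 `|` V t) `\` (V t.+1 `&` V t) |)%:R / (#|` V t.+1 `|` V t |)%:R.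

Definition sustainable (G : nat -> graph) : Prop :=
  ~ (exists T : nat, forall t, (T <= t)%N -> G t = null_graph) /\
  ~ (exists T k : nat, (1 <= k)%N /\ forall t, (T <= t)%N -> G t = G (t + k)%N).

From HB Require Import structures.
From mathcomp Require Import all_boot all_order all_algebra.
From mathcomp Require Import finmap.
From mathcomp Require Import reals.
From mathcomp Require Import zify.

Set Implicit Arguments.
Unset Strict Implicit.
Unset Printing Implicit Defensive.

Import Order.TTheory GRing.Theory Num.Theory.
Local Open Scope ring_scope.
Local Open Scope fset_scope.

(* Extinction is excluded by [n_t > 0]. If instead the graph is eventually
   periodic, with period [k], every vertex alive at a late time [t+1] was alive
   at time [t+1-k]; a vertex created at [t+1] never was, so creation stops and
   the vertex sets can only shrink. A shrinking periodic sequence of sets is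
   constant, hence the nervousness vanishes, contradicting [N^V_t > 0]. *)

Section FreshPeriodic.

Variables (K : choiceType) (V : nat -> {fset K}).

Hypothesis V_fresh : forall t w s,
  w \in V t.+1 -> w \notin V t -> (s <= t)%N -> w \notin V s.

Variables T k : nat.
Hypothesis k_gt0 : (0 < k)%N.
Hypothesis V_periodic : forall t, (T <= t)%N -> V t = V (t + k)%N.

Lemma periodic_fresh_subset t : (T + k <= t)%N -> V t.+1 `<=` V t.
Proof.
move=> le_Tk_t; apply/fsubsetP => w wVt1; apply/negPn/negP => wNVt.
have /negP[] : w \notin V (t.+1 - k) by apply: V_fresh wVt1 wNVt _; lia.
by rewrite V_periodic ?subnK //; lia.
Qed.

Lemma periodic_fresh_stationary : V (T + k).+1 = V (T + k).
Proof.
apply/eqP; rewrite eqEfsubset periodic_fresh_subset //=.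
have shrink : {homo (fun i => V ((T + k).+1 + i)%N) : i j / (i <= j)%N >->
                 (j `<=` i)}.
  apply: homo_leq => [A|B A C AB BC|i]; first exact: fsubset_refl.
    exact: fsubset_trans BC AB.
  by rewrite addnS; apply: periodic_fresh_subset; lia.
have := shrink 0%N k.-1 (leq0n _).
by rewrite addn0 addSn -addnS prednK // -V_periodic //; lia.
Qed.

End FreshPeriodic.

Lemma D3G3_fresh (R : realType) (d : R) (SS SC : pred nat)
    (pos : nat -> point R) (V : nat -> {fset nat}) :
  is_D3G3 d SS SC pos V -> forall t w s,
  w \in V t.+1 -> w \notin V t -> (s <= t)%N -> w \notin V s.
Proof.
move=> [_ D3G3_step] t w s wVt1 wNVt le_st.
have [_ [new [_ [new_created new_fresh]]]] := D3G3_step t.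
have : w \in [fset v in V t.+1 | v \notin V t] by rewrite !inE wVt1 wNVt.
by rewrite new_created => /imfsetP [v creator ->]; apply: new_fresh.
Qed.

Lemma nervousness_gt0_neq (R : realType) (V : nat -> {fset nat}) t :
  0 < nervousness R V t -> V t.+1 != V t.
Proof.
apply: contraTneq; rewrite /nervousness => ->.
by rewrite fsetUid fsetIid fsetDv cardfs0 mul0r ltxx.
Qed.

Theorem theorem1 (R : realType) (d : R) (SS SC : pred nat)
    (pos : nat -> point R) (V : nat -> {fset nat}) :
  0 < d < Num.sqrt 2 / 2 ->
  V 0%N != fset0 ->
  is_D3G3 d SS SC pos V ->
  (forall t : nat, (0 < t)%N -> (0 < #|` V t |)%N /\ 0 < nervousness R V t) ->
  sustainable (fun t => geo_graph d pos (V t)).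
Proof.
move=> _ _ D3G3V alive; split.
  move=> [T /(_ T.+1 (leqnSn T)) /(congr1 fst) /= VT1_empty].
  by have [] := alive T.+1 isT; rewrite VT1_empty cardfs0.
move=> [T [k [k_gt0 G_periodic]]].
have V_periodic t : (T <= t)%N -> V t = V (t + k)%N.
  by move/G_periodic/(congr1 fst).
have [|_ /nervousness_gt0_neq] := alive (T + k)%N; first by lia.
by rewrite (periodic_fresh_stationary (D3G3_fresh D3G3V) k_gt0 V_periodic) eqxx.
Qed.
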